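(* Let $\mathbf{F}=(f_{ij})$ be an $n\times n$ nonnegative matrix, $\vec z=(z_1,\dots,z_n)^{\mathrm T}$ a nonnegative column vector and $\vec y=(y_1,\dots,y_n)$ a nonnegative row vector. Define $T^{\mathrm{in}}_i=\sum_{j} f_{ij}+z_i$ and $T^{\mathrm{out}}_j=\sum_{i} f_{ij}+y_j$, assume all are positive, and assume steady state: $T^{\mathrm{in}}_\ell=T^{\mathrm{out}}_\ell$ for all $\ell$. Let $\mathbf G=(g_{ij})$ with $g_{ij}=f_{ij}/T^{\mathrm{out}}_j$ and $\mathbf G'=(g'_{ij})$ with $g'_{ij}=f_{ij}/T^{\mathrm{in}}_i$. Then for each integer $m\ge0$, $$\sum_{i=1}^n(\mathbf G^m\vec z)_i=\sum_{i=1}^n(\vec y\mathbf G'^m)_i.$$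
   Context: $f_{ij}$ is the flow from node $j$ to node $i$, $z_i$ the boundary input to node $i$, $y_j$ the boundary output from node $j$. $\mathbf G^0=\mathbf G'^0$ is the identity matrix. *)

From mathcomp Require Import all_boot all_order all_algebra.
Set Implicit Arguments. Unset Strict Implicit. Unset Printing Implicit Defensive.
Import Order.TTheory GRing.Theory Num.Theory.
Local Open Scope ring_scope.

Definition mxpow (R : pzRingType) (n : nat) (G : 'M[R]_n) (m : nat) : 'M[R]_n :=
  iter m (fun A => G *m A) 1%:M.

Definition Tin (R : pzRingType) (n : nat) (F : 'M[R]_n) (z : 'cV[R]_n) (i : 'I_n) : R :=
  \sum_(j < n) F i j + z i 0.
Definition Tout (R : pzRingType) (n : nat) (F : 'M[R]_n) (y : 'rV[R]_n) (j : 'I_n) : R :=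
  \sum_(i < n) F i j + y 0 j.

From mathcomp Require Import all_boot all_order all_algebra.
Import Order.TTheory GRing.Theory Num.Theory.
Set Implicit Arguments. Unset Strict Implicit. Unset Printing Implicit Defensive.
Local Open Scope ring_scope.

(* With D the diagonal matrix of throughflows, steady state gives G D = F = D G',
   so G^m D = D G'^m.  The boundary flows are what the network does not pass on:
   z = (I - G) D 1 and y = 1 D (I - G').  Hence
   1 G^m z = 1 G^m (I - G) D 1 = 1 D (I - G') G'^m 1 = y G'^m 1. *)

Lemma mxpow0 (R : pzRingType) n (A : 'M[R]_n) : mxpow A 0 = 1%:M.
Proof. by []. Qed.

Lemma mxpowS (R : pzRingType) n (A : 'M[R]_n) m : mxpow A m.+1 = A *m mxpow A m.
Proof. by []. Qed.

Lemma mxpowSr (R : pzRingType) n (A : 'M[R]_n) m :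
  mxpow A m.+1 = mxpow A m *m A.
Proof.
elim: m => [|m IHm]; first by rewrite mxpowS mxpow0 mulmx1 mul1mx.
by rewrite mxpowS {1}IHm mulmxA.
Qed.

Lemma mxpow_intertwine (R : pzRingType) n (A B D : 'M[R]_n) m :
  A *m D = D *m B -> mxpow A m *m D = D *m mxpow B m.
Proof.
move=> AD_DB; elim: m => [|m IHm]; first by rewrite !mxpow0 mulmx1 mul1mx.
by rewrite !mxpowS -mulmxA IHm !mulmxA AD_DB.
Qed.

Lemma mxpow_subr1_intertwine (R : pzRingType) n (A B D : 'M[R]_n) m :
  A *m D = D *m B ->
  mxpow A m *m ((1%:M - A) *m D) = D *m (1%:M - B) *m mxpow B m.
Proof.
move=> AD_DB.
have B_comm : mxpow B m *m B = B *m mxpow B m by rewrite -mxpowSr.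
rewrite mulmxBl mul1mx AD_DB -[D in D - _]mulmx1 -mulmxBr mulmxA.
rewrite (mxpow_intertwine m AD_DB) -!mulmxA; congr (_ *m _).
by rewrite mulmxBr mulmxBl mulmx1 mul1mx B_comm.
Qed.

Lemma sum_cV (R : pzRingType) n (v : 'cV[R]_n) :
  \sum_i v i 0 = ((const_mx 1 : 'rV_n) *m v) 0 0.
Proof. by rewrite mxE; apply: eq_bigr => i _; rewrite mxE mul1r. Qed.

Lemma sum_rV (R : pzRingType) n (v : 'rV[R]_n) :
  \sum_i v 0 i = (v *m (const_mx 1 : 'cV_n)) 0 0.
Proof. by rewrite mxE; apply: eq_bigr => i _; rewrite mxE mulr1. Qed.

Section SteadyFlow.

Variables (R : fieldType) (n : nat) (F : 'M[R]_n) (z : 'cV[R]_n) (y : 'rV[R]_n).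
Hypothesis Tout_neq0 : forall j, Tout F y j != 0.
Hypothesis steady : forall l, Tin F z l = Tout F y l.

Let G := \matrix_(i, j) (F i j / Tout F y j).
Let G' := \matrix_(i, j) (F i j / Tin F z i).
Let D := diag_mx (\row_j Tout F y j).

Lemma outflow_fractions_mul_diag : G *m D = F.
Proof. by apply/matrixP => i j; rewrite mul_mx_diag !mxE divfK. Qed.

Lemma diag_mul_inflow_fractions : D *m G' = F.
Proof. by apply/matrixP => i j; rewrite mul_diag_mx !mxE steady mulrC divfK. Qed.

Lemma inputs_balance : z = (1%:M - G) *m (D *m const_mx 1).
Proof.
rewrite mulmxA mulmxBl mul1mx outflow_fractions_mul_diag mulmxBl mul_diag_mx.
apply/matrixP => i k; rewrite (ord1 k) !mxE mulr1.
under eq_bigr do rewrite mxE mulr1.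
by rewrite -steady /Tin addrC addKr.
Qed.

Lemma outputs_balance : y = const_mx 1 *m D *m (1%:M - G').
Proof.
rewrite -mulmxA mulmxBr mulmx1 diag_mul_inflow_fractions mulmxBr mul_mx_diag.
apply/matrixP => k j; rewrite (ord1 k) !mxE mul1r.
under eq_bigr do rewrite mxE mul1r.
by rewrite /Tout addrC addKr.
Qed.

Lemma steady_flow_sum_eq m :
  \sum_i (mxpow G m *m z) i 0 = \sum_i (y *m mxpow G' m) 0 i.
Proof.
have GD_DG' : G *m D = D *m G'.
  by rewrite outflow_fractions_mul_diag diag_mul_inflow_fractions.
rewrite sum_cV sum_rV inputs_balance outputs_balance.
rewrite (mulmxA (1%:M - G)) -(mulmxA (const_mx 1)) (mulmxA (mxpow G m)).
by rewrite (mxpow_subr1_intertwine m GD_DG') !mulmxA.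
Qed.

End SteadyFlow.

Theorem lemma2 (R : realFieldType) (n : nat) (F : 'M[R]_n) (z : 'cV[R]_n) (y : 'rV[R]_n)
  (hF : forall i j, 0 <= F i j) (hz : forall i, 0 <= z i 0) (hy : forall j, 0 <= y 0 j)
  (hin : forall i, 0 < Tin F z i) (hout : forall j, 0 < Tout F y j)
  (hss : forall l, Tin F z l = Tout F y l) (m : nat) :
  let G := \matrix_(i, j) (F i j / Tout F y j) in
  let G' := \matrix_(i, j) (F i j / Tin F z i) in
  \sum_(i < n) (mxpow G m *m z) i 0 = \sum_(i < n) (y *m mxpow G' m) 0 i.
Proof. exact: steady_flow_sum_eq (fun j => lt0r_neq0 (hout j)) hss m. Qed.
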